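(* Let $w$ be a positive integer, $x$ an integer with $0\le x\le p-1$, and $h$ a non-negative integer. If $T_n(x)\equiv x\pmod{p^w}$ and $T'_n(x)\equiv 1\pmod{p^w}$, then $T'_n(x+hp)\equiv T'_n(x)\pmod{p^{w+1}}$ and, for every integer $m\ge 2$, $$\frac{T^{(m)}_n(x+hp)\,p^m}{m!}\equiv 0\pmod{p^{w+2}}.$$
   Context: $p$ is a prime with $p>3$ and $n>1$ is an integer with $\gcd(n,p)=\gcd(n,p^2-1)=1$. $T_n(x)\in\mathbb{Z}[x]$ is the Chebyshev polynomial of the first kind: $T_0=1$, $T_1=x$, $T_d=2xT_{d-1}-T_{d-2}$. $T^{(m)}_n$ is its $m$-th derivative, $T'_n=T^{(1)}_n$; note $T^{(m)}_n(a)/m!\in\mathbb{Z}$ for integers $a$. *)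

From mathcomp Require Import all_boot all_order all_algebra.
Set Implicit Arguments. Unset Strict Implicit. Unset Printing Implicit Defensive.
Import GRing.Theory Num.Theory.
Local Open Scope ring_scope.

Fixpoint cheb (d : nat) : {poly int} :=
  match d with
  | 0%N => 1
  | 1%N => 'X
  | (k.+1 as d1).+1 => 2%:P * 'X * cheb d1 - cheb k
  end.

(* Call z good at level c (taylor_dvd) when p^(c+2) divides T^(k)(z) p^k / k! for
   every k >= 2.  Taylor's formula shows that goodness passes from z to z + h p and
   that it forces T'(z + h p) = T'(z) mod p^(c+1); so it suffices to show that x is
   good at level w.

   Everything comes from the differential equations
   (1 - X^2) T^(k+2) = (2k+1) X T^(k+1) + (k^2 - n^2) T^(k).  If p does not divide
   1 - x^2, the Pell identity (1 - X^2) T'^2 = n^2 (1 - T^2) turns the hypotheses into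
   p^w | n^2 - 1, and the equations then propagate p^w | T^(k)(x) to every k >= 2.
   At x = +-1 they degenerate to (2k+1) T^(k+1) = +-(n^2 - k^2) T^(k), whence
   p^v | T^(k)(x) (2k-1)!! with v the valuation of n^2 - 1.  The case x = p - 1 is
   reduced to x = -1: as n is odd, T'(-1) = n^2, and comparing T'(p-1) with T'(-1)
   shows v >= w.  In both cases the bound v_p((2k)!) <= k - 2, valid for p >= 5,
   absorbs the factorials. *)

From mathcomp Require Import all_boot all_order all_algebra.
From mathcomp Require Import ring zify.
Set Implicit Arguments.
Unset Strict Implicit.
Unset Printing Implicit Defensive.

Import GRing.Theory Num.Theory.

Lemma sum_div_expn_le p N m : (0 < p)%N ->
  (p.-1 * \sum_(1 <= i < N.+1) m %/ p ^ i <= m.-1)%N.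
Proof.
move=> p_gt0; elim: N m => [|N IHN] m; first by rewrite big_geq // muln0.
rewrite big_nat_recl // expn1.
rewrite (eq_bigr (fun i => m %/ p %/ p ^ i))%N => [|i _]; last by rewrite expnS divnMA.
have := IHN (m %/ p)%N; have := leq_trunc_div m p; nia.
Qed.

Lemma logn_fact_lt p m : prime p -> (0 < m)%N -> (p.-1 * logn p m`! < m)%N.
Proof.
move=> p_pr m_gt0; rewrite logn_fact //.
by have := @sum_div_expn_le p m m (prime_gt0 p_pr); lia.
Qed.

Lemma logn_fact_double_le p k : prime p -> (4 < p)%N -> (1 < k)%N ->
  (logn p (2 * k)`! <= k - 2)%N.
Proof.
move=> p_pr p_gt4 k_gt1; have p1_ge4 : (4 <= p.-1)%N by lia.
have := @logn_fact_lt p (2 * k) p_pr ltac:(lia).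
have := leq_mul p1_ge4 (leqnn (logn p (2 * k)`!)); lia.
Qed.

Definition odd_fact k := (\prod_(i < k) (2 * i).+1)%N.

Lemma odd_factS k : odd_fact k.+1 = (odd_fact k * (2 * k).+1)%N.
Proof. by rewrite /odd_fact big_ord_recr. Qed.

Lemma fact_double k : (2 * k)`! = (2 ^ k * k`! * odd_fact k)%N.
Proof.
elim: k => [|k IHk]; first by rewrite /odd_fact big_ord0.
rewrite odd_factS (_ : 2 * k.+1 = (2 * k).+2)%N ?factS ?IHk ?expnS; [ring | lia].
Qed.

Lemma mul_bin_bin m j i :
  ('C(m + j + i, m) * 'C(j + i, j) = 'C(m + j + i, m + j) * 'C(m + j, m))%N.
Proof.
apply/eqP; rewrite -(@eqn_pmul2r (m`! * j`! * i`!)) ?muln_gt0 ?fact_gt0 //.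
have := @bin_fact (m + (j + i)) m (leq_addr _ _); rewrite addKn addnA => Cmji.
have /[!addKn] Cmj_i := @bin_fact (m + j + i) (m + j) (leq_addr _ _).
have /[!addKn] Cji := @bin_fact (j + i) j (leq_addr _ _).
have /[!addKn] Cmj := @bin_fact (m + j) m (leq_addr _ _).
apply/eqP; transitivity (m + j + i)`!.
  by rewrite -Cmji -Cji; ring.
by rewrite -Cmj_i -Cmj; ring.
Qed.

Lemma odd_coprime_sqr_pred n p : prime p -> (2 < p)%N -> coprime n (p ^ 2 - 1) -> odd n.
Proof.
move=> p_pr p_gt2 cop_n; apply/negPn/negP => even_n.
have p_odd : odd p by case: (even_prime p_pr) => // p2; rewrite p2 in p_gt2.
have even_p2 : (2 %| p ^ 2 - 1)%N by rewrite dvdn2 oddB ?expn_gt0 ?prime_gt0 // oddX p_odd.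
have two_dvd_n : (2 %| n)%N by rewrite dvdn2.
by have := coprime_dvdr even_p2 (coprime_dvdl two_dvd_n cop_n).
Qed.

Local Open Scope ring_scope.

Lemma PoszX p k : (p ^ k)%:Z = p%:Z ^+ k.
Proof. by rewrite -natz natrX natz. Qed.

Lemma dvdz_pfactor_cancel p c e M (a : int) : prime p -> (0 < M)%N ->
  (logn p M <= e)%N -> ((p%:Z) ^+ (c + e) %| a * M%:Z)%Z -> ((p%:Z) ^+ c %| a)%Z.
Proof.
move=> p_pr M_gt0 le_e; rewrite !dvdzE !abszX abszM !absz_nat.
have [-> | a_gt0] := posnP `|a|%N; first by rewrite dvdn0.
rewrite !pfactor_dvdn ?muln_gt0 ?a_gt0 // lognM //; lia.
Qed.

Lemma coprimez_small p (m : int) : prime p -> (0 < `|m| < p)%N -> coprimez p m.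
Proof.
move=> p_pr /andP[m_gt0 m_lt_p]; rewrite coprimezE prime_coprime //.
by apply/negP => /(dvdn_leq m_gt0); rewrite leqNgt m_lt_p.
Qed.

Lemma coprimez_one_sub_sqr p (x : int) : prime p -> 0 <= x -> x <= p%:Z - 1 ->
  x != 1 -> x != p%:Z - 1 -> coprimez p (1 - x ^+ 2).
Proof.
move=> p_pr x_ge0 x_le /eqP x_neq1 /eqP x_neq_pred; have := prime_gt1 p_pr.
rewrite (_ : 1 - x ^+ 2 = (1 - x) * (1 + x)); last by ring.
by rewrite coprimezMr !coprimez_small //; lia.
Qed.

Lemma int_sqr_eq1 (z : int) : z ^+ 2 = 1 -> z = 1 \/ z = -1.
Proof. by move/eqP; rewrite sqrf_eq1 => /orP[] /eqP; [left | right]. Qed.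

Lemma nat_ind2 (P : nat -> Prop) :
  P 0%N -> P 1%N -> (forall d, P d -> P d.+1 -> P d.+2) -> forall d, P d.
Proof.
move=> P0 P1 PS d; suff [] : P d /\ P d.+1 by [].
by elim: d => [|d [IHd IHd1]]; split=> //; apply: PS.
Qed.

Lemma dvdz_rec2 (d u : int) (a b c : nat -> int) : coprimez d u ->
    (forall k, u * a k.+2 = b k * a k.+1 + c k * a k) ->
    (d %| a 0%N)%Z -> (d %| a 1%N)%Z -> forall k, (d %| a k)%Z.
Proof.
move=> cop_du rec a0 a1; elim/nat_ind2 => // k ak ak1.
by rewrite -(Gauss_dvdzr _ cop_du) rec rpredD ?dvdz_mull.
Qed.

Lemma eq_lincomb (R : comNzRingType) (c a b a' b' : R) :
  a' = b' -> a - b = c * (a' - b') -> a = b.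
Proof. by move=> -> /eqP; rewrite subrr mulr0 subr_eq0 => /eqP. Qed.

Lemma nderivn_nderivn (R : nzRingType) (q : {poly R}) m j :
  (q^`N(m))^`N(j) = q^`N(m + j) *+ 'C(m + j, m).
Proof.
apply/polyP => i; rewrite coefMn !coef_nderivn -!mulrnA addnA.
by rewrite mul_bin_bin.
Qed.

Definition taylor_dvd (q : {poly int}) (P : int) (c : nat) (z : int) :=
  forall k, (1 < k)%N -> (P ^+ (c + 2) %| q^`N(k).[z] * P ^+ k)%Z.

Lemma taylor_dvd_weaken q P c d z : (c <= d)%N ->
  taylor_dvd q P d z -> taylor_dvd q P c z.
Proof.
move=> le_cd Hd k k_gt1; apply: dvdz_trans (Hd k k_gt1).
by apply: dvdz_exp2l; rewrite leq_add2r.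
Qed.

Lemma taylor_dvd_shift q P c z t :
  taylor_dvd q P c z -> taylor_dvd q P c (z + t * P).
Proof.
move=> Hz m m_gt1; rewrite (nderiv_taylor _ (mulrC _ _)) big_distrl /=.
apply: rpred_sum => j _; rewrite nderivn_nderivn hornerMn.
rewrite (_ : _ * _ * _ = q^`N(m + j).[z] * P ^+ (m + j) * (t ^+ j *+ 'C(m + j, m))).
  by apply/dvdz_mulr/Hz; rewrite ltn_addr.
by rewrite exprMn exprD; ring.
Qed.

Lemma taylor_dvd_deriv q P c z t : P != 0 -> taylor_dvd q P c z ->
  (P ^+ (c + 1) %| q^`().[z + t * P] - q^`().[z])%Z.
Proof.
move=> P_neq0 Hz; rewrite -nderivn1.
(* One spare Taylor term, so that the constant one can be split off even if q' = 0. *)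
rewrite (@nderiv_taylor_wide _ (size q^`N(1)).+1 _ _ _ (mulrC _ _) (leqnSn _)).
rewrite big_ord_recl nderivn0 expr0 mulr1 addrC addKr.
apply: rpred_sum => j _; rewrite nderivn_nderivn hornerMn lift0 add1n.
set a := q^`N(j.+2).[z].
have dvd_a : (P ^+ (c + 1) %| a * P ^+ j.+1)%Z.
  by rewrite -(dvdz_mul2r P_neq0) -mulrA -!exprSr -addnS; apply: Hz.
rewrite (_ : _ * _ = a * P ^+ j.+1 * (t ^+ j.+1 *+ 'C(j.+2, 1))).
  exact: dvdz_mulr.
by rewrite exprMn; ring.
Qed.

Lemma taylor_dvd_of_derivn p c q z (d : nat -> nat) : prime p -> (4 < p)%N ->
    (forall k, (1 < k)%N -> (k`! * d k %| (2 * k)`!)%N) ->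
    (forall k, (1 < k)%N -> ((p%:Z) ^+ c %| q^`(k).[z] * (d k)%:R)%Z) ->
  taylor_dvd q p c z.
Proof.
move=> p_pr p_gt4 dvd_fact dvd_derivn k k_gt1.
have M_gt0 : (0 < k`! * d k)%N := dvdn_gt0 (fact_gt0 _) (dvd_fact k k_gt1).
apply: (@dvdz_pfactor_cancel p _ (k - 2) (k`! * d k)) => //.
  apply: leq_trans _ (logn_fact_double_le p_pr p_gt4 k_gt1).
  exact: dvdn_leq_log (fact_gt0 _) (dvd_fact k k_gt1).
rewrite -addnA subnKC // exprD.
rewrite (_ : _ * _ * _ = q^`(k).[z] * (d k)%:R * p%:Z ^+ k).
  exact: dvdz_mul (dvd_derivn k k_gt1) (dvdzz _).
by rewrite nderivn_def hornerMn -mulr_natr !natz PoszM; ring.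
Qed.

Local Notation T := cheb.

(* [hornerE] without its [simp] part, whose monoid-law terms [ring] cannot read. *)
Local Definition hornerRE :=
  (hornerD, hornerN, hornerX, hornerC, horner_exp, hornerM, hornerMn).

Lemma chebSS d : T d.+2 = 'X * T d.+1 *+ 2 - T d.
Proof. by rewrite (_ : T d.+2 = 2%:P * 'X * T d.+1 - T d) //; ring. Qed.

Lemma cheb_pred d : T d = 'X * T d.+1 *+ 2 - T d.+2.
Proof. by rewrite chebSS; ring. Qed.

Lemma deriv_chebSS d : (T d.+2)^`() = (T d.+1 + 'X * (T d.+1)^`()) *+ 2 - (T d)^`().
Proof. by rewrite chebSS !derivE; ring. Qed.

Lemma cheb_deriv e : (1 - 'X^2) * (T e)^`() = ('X * T e - T e.+1) *+ e.
Proof.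
elim/nat_ind2: e => [||d IHd IHd1]; first by rewrite /= derivE; ring.
  by rewrite chebSS /= !derivE; ring.
rewrite deriv_chebSS.
rewrite (_ : _ * _ = (1 - 'X^2) * T d.+1 *+ 2 + 'X * ((1 - 'X^2) * (T d.+1)^`()) *+ 2
                     - (1 - 'X^2) * (T d)^`()); last by ring.
by rewrite IHd IHd1 [T d]cheb_pred [T d.+3]chebSS; ring.
Qed.

Lemma one_sub_X2_neq0 : (1 - 'X^2 : {poly int}) != 0.
Proof. by apply/eqP => /(congr1 (horner^~ 0)); rewrite !hornerE. Qed.

Lemma cheb_ode n : (1 - 'X^2) * (T n)^`()^`() = 'X * (T n)^`() - T n *+ (n * n).
Proof.
have := congr1 deriv (cheb_deriv n); rewrite !derivE => dB.
have {}dB : - ('X *+ 2) * ((1 - 'X^2) * (T n)^`()) + (1 - 'X^2) * ((1 - 'X^2) * (T n)^`()^`())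
    = ((1 - 'X^2) * T n + 'X * ((1 - 'X^2) * (T n)^`()) - (1 - 'X^2) * (T n.+1)^`()) *+ n.
  by apply: (eq_lincomb (c := 1 - 'X^2) dB); ring.
rewrite (cheb_deriv n) (cheb_deriv n.+1) [T n.+2]chebSS in dB.
apply: (mulfI one_sub_X2_neq0); rewrite mulrBr [_ * ('X * _)]mulrCA (cheb_deriv n).
by apply: (eq_lincomb (c := 1) dB); ring.
Qed.

Lemma cheb_ode_derivn n k : (1 - 'X^2) * (T n)^`(k.+2)
  = 'X *+ (2 * k).+1 * (T n)^`(k.+1) + ((k * k)%:R - (n * n)%:R) * (T n)^`(k).
Proof.
elim: k => [|k IHk]; first by rewrite !derivnS derivn0 cheb_ode; ring.
have := congr1 deriv IHk; rewrite !derivE -!derivnS => dIHk.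
by apply: (eq_lincomb (c := 1) dIHk); ring.
Qed.

Lemma cheb_cassini e : T e ^+ 2 - 'X * T e * T e.+1 *+ 2 + T e.+1 ^+ 2 = 1 - 'X^2.
Proof.
elim: e => [|e IHe]; first by rewrite /=; ring.
by rewrite -IHe chebSS; ring.
Qed.

Lemma cheb_pell n : (1 - 'X^2) * (T n)^`() ^+ 2 = (1 - T n ^+ 2) *+ (n * n).
Proof.
apply: (mulfI one_sub_X2_neq0).
rewrite (_ : _ * (_ * _) = ((1 - 'X^2) * (T n)^`()) ^+ 2); last by ring.
rewrite cheb_deriv; apply: (eq_lincomb (c := (n * n)%:R) (cheb_cassini n)); ring.
Qed.

Lemma cheb_sqrt1 (z : int) e : z ^+ 2 = 1 ->
  (T e).[z] = z ^+ e /\ (T e)^`().[z] = z ^+ e.+1 * (e * e)%:R.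
Proof.
move=> z2; have z_pm1 := int_sqr_eq1 z2.
elim/nat_ind2: e => [||d [IHd IHd'] [IHd1 IHd1']].
- by rewrite /= derivE !hornerE.
- by rewrite /= derivE !hornerE z2.
rewrite deriv_chebSS chebSS !hornerRE IHd IHd' IHd1 IHd1'
  !exprS.
by case: z_pm1 {z2 IHd IHd' IHd1 IHd1'} => ->; split; ring.
Qed.

Lemma cheb_ode_derivn_at n k (z : int) : (1 - z ^+ 2) * (T n)^`(k.+2).[z]
  = z *+ (2 * k).+1 * (T n)^`(k.+1).[z] + ((k * k)%:R - (n * n)%:R) * (T n)^`(k).[z].
Proof. by have /(congr1 (horner^~ z)) := cheb_ode_derivn n k; rewrite !hornerRE. Qed.

Lemma cheb_derivn_sqrt1 n k (z : int) : z ^+ 2 = 1 ->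
  (T n)^`(k.+1).[z] * (odd_fact k.+1)%:R
  = z * ((n * n)%:R - (k * k)%:R) * ((T n)^`(k).[z] * (odd_fact k)%:R).
Proof.
move/int_sqr_eq1 => z_pm1; have := cheb_ode_derivn_at n k z; rewrite odd_factS natrM.
case: z_pm1 => -> ode.
- by apply: (eq_lincomb (c := - (odd_fact k)%:R) ode); ring.
- by apply: (eq_lincomb (c := (odd_fact k)%:R) ode); ring.
Qed.

Lemma taylor_dvd_cheb_sqrt1 n p u (z : int) : prime p -> (4 < p)%N -> z ^+ 2 = 1 ->
  ((p%:Z) ^+ u %| (n * n)%:R - 1)%Z -> taylor_dvd (T n) p u z.
Proof.
move=> p_pr p_gt4 z2 dvd_n2; apply: (taylor_dvd_of_derivn (d := odd_fact)) => //.
  by move=> k _; rewrite fact_double -mulnA dvdn_mull.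
elim=> [|k IHk] // k_gt1; rewrite cheb_derivn_sqrt1 //.
have [-> | k_neq1] := eqVneq k 1%N; first by rewrite mul1n dvdz_mulr ?dvdz_mull.
by rewrite dvdz_mull ?IHk //; lia.
Qed.

Lemma taylor_dvd_cheb_regular n p w (x : int) : prime p -> (4 < p)%N ->
    coprimez p (1 - x ^+ 2) ->
    ((p%:Z) ^+ w %| (T n).[x] - x)%Z -> ((p%:Z) ^+ w %| (T n)^`().[x] - 1)%Z ->
  taylor_dvd (T n) p w x.
Proof.
move=> p_pr p_gt4 cop_x dvd_T dvd_T'; set P := (p%:Z) ^+ w.
have cop : coprimez P (1 - x ^+ 2) by apply: coprimezXl.
set t := fun k => (T n)^`(k).[x].
have dvd_n2 : (P %| (n * n)%:R - 1)%Z.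
  rewrite -(Gauss_dvdzr _ cop).
  have /(congr1 (horner^~ x)) := cheb_pell n; rewrite !hornerRE => pell.
  rewrite (_ : _ * _ = (1 - x ^+ 2) * ((T n)^`().[x] - 1) * (1 + (T n)^`().[x])
                       + (n * n)%:R * (((T n).[x] - x) * ((T n).[x] + x))).
    by apply: rpredD; [apply/dvdz_mulr/dvdz_mull | apply/dvdz_mull/dvdz_mulr].
  by apply: (eq_lincomb (c := -1) pell); ring.
have dvd_t2 : (P %| t 2%N)%Z.
  rewrite -(Gauss_dvdzr _ cop) cheb_ode_derivn_at derivn1 derivn0.
  rewrite (_ : _ + _ = x * ((T n)^`().[x] - 1) - (n * n)%:R * ((T n).[x] - x)
                       - x * ((n * n)%:R - 1)); last by ring.
  by rewrite !rpredB ?dvdz_mull.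
have dvd_t3 : (P %| t 3%N)%Z.
  rewrite -(Gauss_dvdzr _ cop) cheb_ode_derivn_at derivn1.
  apply: rpredD; first exact: dvdz_mull.
  by apply: dvdz_mulr; rewrite mul1n -opprB rpredN.
apply: (taylor_dvd_of_derivn (d := fun=> 1%N)) => //.
  by move=> k _; rewrite fact_double muln1 dvdn_mulr ?dvdn_mull.
move=> k k_gt1; rewrite mulr1 -(subnKC k_gt1).
pose b j : int := x *+ (2 * j.+2).+1; pose c j : int := (j.+2 * j.+2)%:R - (n * n)%:R.
apply: (@dvdz_rec2 P (1 - x ^+ 2) (fun j => t j.+2) b c) => // j.
exact: cheb_ode_derivn_at.
Qed.

Lemma taylor_dvd_cheb_pred_p n p w : prime p -> (4 < p)%N -> odd n -> (1 < n)%N ->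
    ((p%:Z) ^+ w %| (T n)^`().[p%:Z - 1] - 1)%Z ->
  taylor_dvd (T n) p w (p%:Z - 1).
Proof.
move=> p_pr p_gt4 n_odd n_gt1 dvd_T'; set u := logn p (n * n - 1).
have n2_gt0 : (0 < n * n - 1)%N by nia.
have n2E : (n * n - 1)%:Z = (n * n)%:R - 1 by rewrite -natz natrB //; nia.
have dvd_u : ((p%:Z) ^+ u %| (n * n)%:R - 1)%Z by rewrite -n2E -PoszX dvdzE pfactor_dvdnn.
have m1_2 : (-1 : int) ^+ 2 = 1 by rewrite sqrrN expr1n.
have Hu := taylor_dvd_cheb_sqrt1 p_pr p_gt4 m1_2 dvd_u.
have T'm1 : (T n)^`().[-1] = (n * n)%:R.
  by have [_ ->] := cheb_sqrt1 n m1_2; rewrite -signr_odd /= n_odd mul1r.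
have p_neq0 : p%:Z != 0 by rewrite eqz_nat -lt0n prime_gt0.
have := taylor_dvd_deriv 1 p_neq0 Hu.
rewrite mul1r [-1 + _]addrC T'm1 => dvd_T'u.
have w_le_u : (w <= u)%N.
  rewrite leqNgt; apply/negP => u_lt_w.
  have : ((p%:Z) ^+ (u + 1) %| (n * n)%:R - 1)%Z.
    rewrite (_ : _ - 1 = (T n)^`().[p%:Z - 1] - 1 - ((T n)^`().[p%:Z - 1] - (n * n)%:R)).
      by apply: rpredB => //; apply: dvdz_trans _ dvd_T'; rewrite dvdz_exp2l // addn1.
    by ring.
  by rewrite -n2E -PoszX dvdzE /= pfactor_dvdn //; lia.
have := taylor_dvd_shift 1 (taylor_dvd_weaken w_le_u Hu).
by rewrite mul1r addrC.
Qed.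

Theorem lemma5 (p n w : nat) (x : int) (h : nat) :
  prime p -> (3 < p)%N -> (1 < n)%N ->
  coprime n p -> coprime n (p ^ 2 - 1) ->
  (0 < w)%N -> 0 <= x -> x <= (p%:Z - 1) ->
  ((cheb n).[x] == x %[mod (p ^ w)%:Z])%Z ->
  (((cheb n)^`()).[x] == 1 %[mod (p ^ w)%:Z])%Z ->
  (((cheb n)^`()).[x + (h * p)%:Z] == ((cheb n)^`()).[x] %[mod (p ^ w.+1)%:Z])%Z
  /\ (forall m : nat, (2 <= m)%N ->
        (((cheb n)^`N(m)).[x + (h * p)%:Z] * (p ^ m)%:Z == 0 %[mod (p ^ (w + 2))%:Z])%Z).
Proof.
move=> p_pr p_gt3 n_gt1 _ cop_n _ x_ge0 x_le; rewrite !eqz_mod_dvd !PoszX => dvd_T dvd_T'.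
have p_gt4 : (4 < p)%N by case: (ltngtP p 4) p_pr p_gt3 => // ->.
have Hx : taylor_dvd (T n) p w x.
  have [x1 | x_neq1] := eqVneq x 1.
    have [_ T'1] := cheb_sqrt1 n (expr1n _ 2).
    rewrite x1 T'1 expr1n mul1r in dvd_T' *.
    exact: taylor_dvd_cheb_sqrt1 (expr1n _ 2) dvd_T'.
  have [x_pred | x_neq_pred] := eqVneq x (p%:Z - 1).
    rewrite x_pred in dvd_T' *; apply: taylor_dvd_cheb_pred_p => //.
    exact: odd_coprime_sqr_pred p_pr (ltnW p_gt3) cop_n.
  by apply: taylor_dvd_cheb_regular => //; apply: coprimez_one_sub_sqr.
have p_neq0 : p%:Z != 0 by rewrite eqz_nat -lt0n prime_gt0.
rewrite PoszM -addn1; split; first exact: taylor_dvd_deriv _ p_neq0 Hx.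
by move=> m m_gt1; rewrite eqz_mod_dvd subr0 PoszX; apply: taylor_dvd_shift.
Qed.
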